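(* Let $N$ be an NFA, let $L_0$ be a forward-admissible initial partition of its vertex set $V$, and let $L$ be the partition output by the forward refinement algorithm started from $L_0$. For a finite sequence $\tau$ over $A\cup\{\varepsilon\}$ let $R(\tau)$ be the set of vertices reachable on $\tau$ from the starting vertex $v_s$. Then for every such $\tau$ and every $Z\in L$, either $Z\subseteq R(\tau)$ or $Z\cap R(\tau)=\emptyset$.
   Context: An NFA $N$ over a finite alphabet $A$ consists of a finite vertex set $V$, a starting vertex $v_s\in V$, accepting action sets for the vertices, and a set of labeled edges $v\xrightarrow{\lambda}w$ with $v,w\in V$ and $\lambda\in A\cup\{\varepsilon\}$. For a vertex $u$ and a finite sequence $\tau=\tau_1\cdots\tau_r$ ($r\ge0$) with $\tau_i\in A\cup\{\varepsilon\}$, a vertex $w$ is reachable from $u$ on $\tau$ if there are vertices $u=v_1,\dots,v_{r+1}=w$ with an edge $v_i\xrightarrow{\tau_i}v_{i+1}$ for each $i$. A partition $L_0$ of $V$ is a forward-admissible initial partition if $\{v_s\}\in L_0$. Refining a partition $P$ of $V$ by a subset $Y\subseteq V$ means replacing $P$ by the nonempty sets among $\{B\cap Y, B\setminus Y : B\in P\}$. Forward refinement algorithm: given $L_i$, for each $Z\in L_i$ and each $\sigma\in A\cup\{\varepsilon\}$ let $Z[\sigma]=\{z\in V: z'\xrightarrow{\sigma}z\text{ for some }z'\in Z\}$; $L_{i+1}$ is obtained from $L_i$ by refining successively by all these sets $Z[\sigma]$. Repeat until $L_{i+1}=L_i$ and output this converged partition $L$. *)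

From mathcomp Require Import all_boot.
Set Implicit Arguments. Unset Strict Implicit. Unset Printing Implicit Defensive.

(* An NFA is given by a finite vertex type V, a finite alphabet A, labels in
   option A (None = epsilon), an edge relation [edge v l w] for v -l-> w, and a
   starting vertex. Accepting action sets play no role in the statement. *)

Section NFA.
Variables (V A : finType) (edge : V -> option A -> V -> bool).

Fixpoint reachable (u : V) (tau : seq (option A)) (w : V) : Prop :=
  match tau with
  | [::] => u = w
  | s :: tau' => exists v, edge u s v /\ reachable v tau' w
  end.

Definition succ_set (Z : {set V}) (s : option A) : {set V} :=
  [set z | [exists z', (z' \in Z) && edge z' s z]].

Definition refine (P : {set {set V}}) (Y : {set V}) : {set {set V}} :=
  ([set B :&: Y | B in P] :|: [set B :\: Y | B in P]) :\ set0.

Definition fwd_step (P : {set {set V}}) : {set {set V}} :=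
  foldl refine P [seq succ_set Z s | Z <- enum P, s <- enum {: option A}].

Definition fwd_iter (L0 : {set {set V}}) (n : nat) : {set {set V}} :=
  iter n fwd_step L0.

End NFA.

From mathcomp Require Import all_boot.
Unset Printing Implicit Defensive.

(* Refining by Y makes the result saturate Y, and saturation survives further
   refinement; so a fixed point L of the forward step saturates every Z[sigma]
   with Z in L.  For such an L, covering V, saturation of X passes to X[sigma]:
   a block meeting X[sigma] receives an edge from some block Z of L inside X,
   hence lies in Z[sigma], which is inside X[sigma].  Starting from the block
   {v_s}, which L saturates because it refines L0, induction on tau shows that
   L saturates every reachable set R(tau). *)

Section Refinement.
Context {V : finType}.
Implicit Types (P Q : {set {set V}}) (B C X Y : {set V}).

Definition saturated P X := forall B, B \in P -> B \subset X \/ [disjoint B & X].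

Definition finer Q P := forall B, B \in Q -> exists2 C, C \in P & B \subset C.

Lemma finer_refl P : finer P P.
Proof. by move=> B BP; exists B. Qed.

Lemma finer_trans {P Q R} : finer R Q -> finer Q P -> finer R P.
Proof.
move=> fRQ fQP B /fRQ[C /fQP[D DP CD] BC].
by exists D => //; apply: subset_trans BC CD.
Qed.

Lemma saturated_finer {P Q X} : finer Q P -> saturated P X -> saturated Q X.
Proof.
move=> fQP satP B /fQP[C /satP[CX|CX] BC].
  by left; apply: subset_trans BC CX.
by right; apply: disjointWl BC CX.
Qed.

Lemma saturated_block {P C} : trivIset P -> C \in P -> saturated P C.
Proof.
move=> /trivIsetP tiP CP B BP.
by have [-> | neqBC] := eqVneq B C; [left | right; apply: tiP].
Qed.

Lemma mem_refine P Y B :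
  B \in refine P Y -> exists2 C, C \in P & B = C :&: Y \/ B = C :\: Y.
Proof.
by rewrite !inE => /andP[_ /orP[]] /imsetP[C CP ->]; exists C => //; [left|right].
Qed.

Lemma finer_refine P Y : finer (refine P Y) P.
Proof.
move=> B /mem_refine[C CP [->|->]]; exists C => //.
  exact: subsetIl.
exact: subsetDl.
Qed.

Lemma saturated_refine P Y : saturated (refine P Y) Y.
Proof.
move=> B /mem_refine[C _ [->|->]]; first by left; apply: subsetIr.
by right; rewrite disjoint_sym disjoints_subset setCD subsetUr.
Qed.

Lemma cover_refine P Y : cover (refine P Y) = cover P.
Proof.
apply/setP=> v; apply/bigcupP/bigcupP => [[B /finer_refine[C CP BC] vB]|].
  by exists C => //; apply: (subsetP BC).
move=> [C CP vC]; have [vY|vY] := boolP (v \in Y).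
  exists (C :&: Y); last by rewrite inE vC.
  rewrite !inE (imset_f (fun B => B :&: Y)) ?andbT //.
  by apply/set0Pn; exists v; rewrite inE vC.
exists (C :\: Y); last by rewrite inE vC vY.
rewrite !inE (imset_f (fun B => B :\: Y)) ?orbT ?andbT //.
by apply/set0Pn; exists v; rewrite inE vC vY.
Qed.

Lemma finer_foldl_refine P ys : finer (foldl (@refine V) P ys) P.
Proof.
elim: ys P => [|y ys IH] P /=; first exact: finer_refl.
exact: finer_trans (IH _) (finer_refine P y).
Qed.

Lemma saturated_foldl_refine P ys Y :
  Y \in ys -> saturated (foldl (@refine V) P ys) Y.
Proof.
elim: ys P => // y ys IH P; rewrite inE => /orP[/eqP-> | Yys] /=; last exact: IH.
exact: saturated_finer (finer_foldl_refine _ ys) (saturated_refine P y).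
Qed.

Lemma cover_foldl_refine P ys : cover (foldl (@refine V) P ys) = cover P.
Proof. by elim: ys P => //= y ys IH P; rewrite IH cover_refine. Qed.

End Refinement.

Section ForwardRefinement.
Context {V A : finType} (edge : V -> option A -> V -> bool).
Implicit Types (P L : {set {set V}}) (X Z : {set V}).

Lemma saturated_fwd_step P Z s :
  Z \in P -> saturated (fwd_step edge P) (succ_set edge Z s).
Proof. by move=> ZP; apply: saturated_foldl_refine; rewrite allpairs_f ?mem_enum. Qed.

Lemma finer_fwd_iter L0 n : finer (fwd_iter edge L0 n) L0.
Proof.
elim: n => [|n IH] /=; first exact: finer_refl.
exact: finer_trans (finer_foldl_refine _ _) IH.
Qed.

Lemma cover_fwd_iter L0 n : cover (fwd_iter edge L0 n) = cover L0.
Proof. by elim: n => //= n IH; rewrite cover_foldl_refine. Qed.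

Definition reach_set X (tau : seq (option A)) : {set V} :=
  foldl (succ_set edge) X tau.

Lemma mem_reach_set X tau w :
  w \in reach_set X tau <-> exists2 u, u \in X & reachable edge u tau w.
Proof.
elim: tau X => [|s tau IH] X /=.
  by split=> [wX | [u uX <-]]; first exists w.
apply: iff_trans (IH _) _.
split=> [[v /[!inE] /existsP[u /andP[uX e]] r] | [u uX [v [e r]]]].
  by exists u => //; exists v.
by exists v => //; rewrite inE; apply/existsP; exists u; rewrite uX.
Qed.

Lemma mem_reach_set1 u tau w :
  w \in reach_set [set u] tau <-> reachable edge u tau w.
Proof.
apply: iff_trans (mem_reach_set _ _ _) _.
by split=> [[u' /set1P-> //] | r]; exists u; rewrite ?set11.
Qed.

Section StableCover.
Variable L : {set {set V}}.
Hypothesis coverL : cover L = [set: V].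
Hypothesis stableL : forall Z s, Z \in L -> saturated L (succ_set edge Z s).

Lemma saturated_succ_set X s : saturated L X -> saturated L (succ_set edge X s).
Proof.
move=> satX C CL; have [|] := boolP [disjoint C & succ_set edge X s]; first by right.
rewrite -setI_eq0 => /set0Pn[v /setIP[vC /[!inE] /existsP[u /andP[uX e]]]].
have /bigcupP[Z ZL uZ] : u \in cover L by rewrite coverL.
have ZX : Z \subset X.
  by have [//|/disjointFr/(_ uZ)] := satX Z ZL; rewrite uX.
have vZs : v \in succ_set edge Z s by rewrite inE; apply/existsP; exists u; rewrite uZ.
have [CZs|/disjointFr/(_ vC)] := stableL Z s ZL C CL; last by rewrite vZs.
left; apply: (subset_trans CZs); apply/subsetP=> w /[!inE] /existsP[u' /andP[u'Z e']].
by apply/existsP; exists u'; rewrite e' (subsetP ZX).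
Qed.

Lemma saturated_reach_set X tau : saturated L X -> saturated L (reach_set X tau).
Proof. by elim: tau X => //= s tau IH X /saturated_succ_set satXs; apply: IH. Qed.

End StableCover.

End ForwardRefinement.

Theorem mainTheorem6 (V A : finType) (edge : V -> option A -> V -> bool)
    (vs : V) (L0 : {set {set V}}) (n : nat) :
  partition L0 [set: V] ->
  [set vs] \in L0 ->
  (* the algorithm has converged after n rounds; L is its output *)
  fwd_step edge (fwd_iter edge L0 n) = fwd_iter edge L0 n ->
  forall (tau : seq (option A)) (Z : {set V}),
    Z \in fwd_iter edge L0 n ->
    (forall z, z \in Z -> reachable edge vs tau z) \/
    (forall z, z \in Z -> ~ reachable edge vs tau z).
Proof.
move=> partL0 vsL0 fixL tau Z ZL.
set L := fwd_iter edge L0 n in fixL ZL.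
have coverL : cover L = [set: V].
  by rewrite cover_fwd_iter (cover_partition partL0).
have stableL Z' s : Z' \in L -> saturated L (succ_set edge Z' s).
  by rewrite -{2}fixL; apply: saturated_fwd_step.
have sat_vs : saturated L [set vs].
  exact: saturated_finer (finer_fwd_iter edge L0 n)
                         (saturated_block (partition_trivIset partL0) vsL0).
have [ZR|ZR] := saturated_reach_set edge L coverL stableL _ tau sat_vs Z ZL.
  by left=> z /(subsetP ZR) /mem_reach_set1.
by right=> z zZ /mem_reach_set1; rewrite (disjointFr ZR zZ).
Qed.
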